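(* For every integer $n \geq 1$, we have $\gamma_{\mathrm{aff}}(B_n) = n+1$, where $B_n$ is the closed unit ball of the Euclidean space $\mathbf{R}^n$.
   Context: For a convex body $K \subset \mathbf{R}^n$, an affine map $\Phi : \mathbf{R}^n \to \mathbf{R}^n$ is $K$-positive if $\Phi(K) \subset K$, strictly $K$-positive if $\Phi(K) \subset \mathrm{int}(K)$, and $K$-primitive if it is $K$-positive and there is an integer $k \geq 1$ with $\Phi^k$ strictly $K$-positive; the smallest such $k$ is $\gamma_{\mathrm{aff}}(K,\Phi)$. The affine maximal exponent $\gamma_{\mathrm{aff}}(K)$ is the supremum of $\gamma_{\mathrm{aff}}(K,\Phi)$ over all $K$-primitive affine maps $\Phi : \mathbf{R}^n \to \mathbf{R}^n$. *)

From HB Require Import structures.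
From mathcomp Require Import all_boot all_order all_algebra.
From mathcomp Require Import all_classical all_reals ereal.
Set Implicit Arguments. Unset Strict Implicit. Unset Printing Implicit Defensive.
Import Order.TTheory GRing.Theory Num.Theory.
Local Open Scope ring_scope.
Local Open Scope classical_set_scope.

Definition sqnorm (R : realType) (n : nat) (x : 'cV[R]_n) : R :=
  \sum_(i < n) (x i 0) ^+ 2.

Arguments sqnorm {R n} x.
Definition unit_ball (R : realType) (n : nat) : set 'cV[R]_n :=
  [set x | sqnorm x <= 1].

Definition interior_set (R : realType) (n : nat) (K : set 'cV[R]_n) : set 'cV[R]_n :=
  [set x | exists2 e : R, 0 < e &
     forall y : 'cV[R]_n, sqnorm (y - x) < e ^+ 2 -> K y].

Definition is_affine (R : realType) (n : nat) (f : 'cV[R]_n -> 'cV[R]_n) : Prop :=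
  exists (A : 'M[R]_n) (b : 'cV[R]_n), forall x, f x = A *m x + b.

Definition K_positive (R : realType) (n : nat) (K : set 'cV[R]_n)
  (f : 'cV[R]_n -> 'cV[R]_n) : Prop := f @` K `<=` K.

Definition strictly_K_positive (R : realType) (n : nat) (K : set 'cV[R]_n)
  (f : 'cV[R]_n -> 'cV[R]_n) : Prop := f @` K `<=` interior_set K.

Definition K_primitive (R : realType) (n : nat) (K : set 'cV[R]_n)
  (f : 'cV[R]_n -> 'cV[R]_n) : Prop :=
  K_positive K f /\ exists k : nat, (1 <= k)%N /\ strictly_K_positive K (iter k f).

Definition is_gamma_aff_map (R : realType) (n : nat) (K : set 'cV[R]_n)
  (f : 'cV[R]_n -> 'cV[R]_n) (k : nat) : Prop :=
  [/\ (1 <= k)%N, strictly_K_positive K (iter k f) &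
      forall j : nat, (1 <= j)%N -> (j < k)%N -> ~ strictly_K_positive K (iter j f)].

Definition gamma_aff (R : realType) (n : nat) (K : set 'cV[R]_n) : \bar R :=
  ereal_sup [set ((k%:R : R)%:E) | k in
    [set k : nat | exists f, [/\ is_affine f, K_primitive K f & is_gamma_aff_map K f k]]].
Arguments unit_ball R n : clear implicits.

From HB Require Import structures.
From mathcomp Require Import all_boot all_order all_algebra.
From mathcomp Require Import all_classical all_reals ereal.
From mathcomp Require Import zify ring lra.
Import Order.TTheory GRing.Theory Num.Theory.
Local Open Scope ring_scope.

(* Let f be affine with f(B) in B and f^k0(B) in int B, and call
   x "on the sphere up to j" when x, f x, ..., f^j x all have norm 1.  If
   |f^j x| = 1 for some x in B, then x is on the sphere up to j: an affine
   self-map of B sending an interior point to the sphere is constant, which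
   primitivity forbids.  These level sets S_j are closed under the affine
   combinations that lie on the sphere, because at every contact point x of an
   affine self-map g = M _ + d of B one has M^T (g x) = lambda x with one and
   the same lambda.  If S_(n+1) were nonempty, either some S_j with j <= n would
   be contained in S_(j+1), hence f-invariant, contradicting primitivity, or
   there would be points X_j in S_j \ S_(j+1) for j <= n and X_(n+1) in
   S_(n+1); these n+2 points of R^n are affinely dependent, so the point of
   least index occurring in a dependence is an affine combination of later
   ones and lies in S_(j+1) after all.  Hence f^(n+1)(B) lies in int B.

   For r = 1/2 and q = r^(2n), the weighted cyclic shift
   x |-> (-r^(n+1) x_n + b, r x_1, ..., r x_(n-1)) maps B into itself for a
   suitable b > 0, and its n-th iterate is x |-> -q x + (1-q) u with |u| = 1.
   So f^n(-u) = u lies on the sphere, while f^(n+1) maps B into int B. *)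

Section InnerProduct.
Context {R : realType} {n : nat}.
Implicit Types (u v w x y z : 'cV[R]_n).

Definition dot u v : R := (u^T *m v) 0 0.

Lemma sqnormE x : sqnorm x = dot x x.
Proof. by rewrite /dot mxE; apply: eq_bigr => i _; rewrite mxE expr2. Qed.

Lemma dotC u v : dot u v = dot v u.
Proof. by rewrite /dot !mxE; apply: eq_bigr => i _; rewrite !mxE mulrC. Qed.

Lemma dotDr u v w : dot u (v + w) = dot u v + dot u w.
Proof. by rewrite /dot mulmxDr mxE. Qed.

Lemma dotDl u v w : dot (v + w) u = dot v u + dot w u.
Proof. by rewrite dotC dotDr !(dotC u). Qed.

Lemma dotZr a u v : dot u (a *: v) = a * dot u v.
Proof. by rewrite /dot -scalemxAr mxE. Qed.

Lemma dotZl a u v : dot (a *: v) u = a * dot v u.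
Proof. by rewrite dotC dotZr dotC. Qed.

Lemma dotBr u v w : dot u (v - w) = dot u v - dot u w.
Proof. by rewrite dotDr -scaleN1r dotZr mulN1r. Qed.

Lemma dotBl u v w : dot (v - w) u = dot v u - dot w u.
Proof. by rewrite dotC dotBr !(dotC u). Qed.

Lemma dot0r u : dot u 0 = 0.
Proof. by rewrite /dot mulmx0 mxE. Qed.

Lemma dot_mulmxr (M : 'M[R]_n) y z : dot y (M *m z) = dot (M^T *m y) z.
Proof. by rewrite /dot trmx_mul trmxK mulmxA. Qed.

Lemma dot_suml N (c : 'I_N -> R) (u : 'I_N -> 'cV[R]_n) v :
  dot (\sum_i c i *: u i) v = \sum_i c i * dot (u i) v.
Proof.
elim/big_rec2: _ => [|i s a _ <-]; first by rewrite dotC dot0r.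
by rewrite dotDl dotZl.
Qed.

Lemma sqnorm_ge0 x : 0 <= sqnorm x.
Proof. by apply: sumr_ge0 => i _; rewrite sqr_ge0. Qed.

Lemma sqnorm_eq0 x : sqnorm x = 0 -> x = 0.
Proof.
move=> x0; apply/matrixP => i j; rewrite (ord1 j) mxE.
have := @psumr_eq0P _ _ predT (fun k => x k 0 ^+ 2) (fun k _ => sqr_ge0 _) x0 i isT.
by move/eqP; rewrite sqrf_eq0 => /eqP.
Qed.

Lemma sqnormD u v : sqnorm (u + v) = sqnorm u + 2 * dot u v + sqnorm v.
Proof. rewrite !sqnormE dotDl !dotDr (dotC v u); ring. Qed.

Lemma sqnormB u v : sqnorm (u - v) = sqnorm u - 2 * dot u v + sqnorm v.
Proof. rewrite !sqnormE dotBl !dotBr (dotC v u); ring. Qed.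

Lemma sqnormZ a u : sqnorm (a *: u) = a ^+ 2 * sqnorm u.
Proof. rewrite !sqnormE dotZl dotZr; ring. Qed.

Lemma sqnormN u : sqnorm (- u) = sqnorm u.
Proof. by rewrite -scaleN1r sqnormZ sqrrN expr1n mul1r. Qed.

Lemma sqnorm0 : sqnorm (0 : 'cV[R]_n) = 0.
Proof. by rewrite sqnormE dot0r. Qed.

Lemma dot_le_sqnorm u v : 2 * dot u v <= sqnorm u + sqnorm v.
Proof. have := sqnorm_ge0 (u - v); rewrite sqnormB; lra. Qed.

Lemma dot_le_young u v {e} : 0 < e -> 2 * dot u v <= e * sqnorm u + e^-1 * sqnorm v.
Proof.
move=> e_gt0; have := dot_le_sqnorm (e *: u) v.
rewrite dotZl sqnormZ => le_e.
rewrite -(ler_pM2l e_gt0) mulrDr !mulrA mulfV ?gt_eqF // mul1r -expr2.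
by rewrite (mulrC e 2) -mulrA.
Qed.

Lemma parallelogram u v :
  sqnorm (u + v) + sqnorm (u - v) = 2 * sqnorm u + 2 * sqnorm v.
Proof. rewrite sqnormD sqnormB; ring. Qed.

Lemma sqnorm_convex_comb s t u v : s + t = 1 ->
  sqnorm (s *: u + t *: v) = s * sqnorm u + t * sqnorm v - s * t * sqnorm (u - v).
Proof.
move=> st1; rewrite sqnormB sqnormD !sqnormZ dotZl dotZr.
have -> : t = 1 - s by rewrite -st1 addrAC subrr add0r.
ring.
Qed.

Lemma sqr_coord_le_sqnorm x i : x i 0 ^+ 2 <= sqnorm x.
Proof. by rewrite /sqnorm (bigD1 i) //= lerDl sumr_ge0 // => j _; apply: sqr_ge0. Qed.

Lemma unit_dot_eq1 x y : sqnorm x = 1 -> sqnorm y = 1 -> dot x y = 1 -> x = y.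
Proof.
move=> x1 y1 xy1; apply/eqP; rewrite -subr_eq0; apply/eqP/sqnorm_eq0.
by rewrite sqnormB x1 y1 xy1; ring.
Qed.

Lemma sqnorm_le_of_dot_le {g l} :
  (forall z, sqnorm z <= 1 -> dot g z <= l) -> sqnorm g <= l ^+ 2.
Proof.
move=> le_l; set G := sqnorm g.
have l_ge0 : 0 <= l by have := le_l 0; rewrite sqnorm0 dot0r; apply.
have [->|G_gt0] := eqVneq G 0; first by rewrite sqr_ge0.
have G_ge0 : 0 <= G := sqnorm_ge0 g.
have sG_gt0 : 0 < Num.sqrt G by rewrite sqrtr_gt0 lt_neqAle eq_sym G_gt0.
have G_eq : G = Num.sqrt G * Num.sqrt G by rewrite -expr2 sqr_sqrtr.
have := le_l ((Num.sqrt G)^-1 *: g).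
rewrite sqnormZ dotZr -sqnormE -/G exprVn expr2 -G_eq mulVf // lexx => /(_ isT).
rewrite [X in _ * X]G_eq mulKf ?gt_eqF // => le_sG.
by rewrite G_eq expr2 ler_pM // sqrtr_ge0.
Qed.
End InnerProduct.

Section UnitBall.
Context {R : realType} {n : nat}.
Implicit Types (x y z : 'cV[R]_n).

Lemma interior_unit_ballP z : interior_set (unit_ball R n) z <-> sqnorm z < 1.
Proof.
split=> [[e e_gt0 near_z]|z_lt1].
  have z_le1 : sqnorm z <= 1 by apply: near_z; rewrite subrr sqnorm0 exprn_gt0.
  rewrite lt_neqAle z_le1 andbT; apply/eqP => z1.
  have shift : (1 + e / 2) *: z - z = (e / 2) *: z.
    by rewrite scalerDl scale1r addrAC subrr add0r.
  have := near_z ((1 + e / 2) *: z).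
  rewrite shift /unit_ball /= !sqnormZ z1 !mulr1 => out.
  have : (1 + e / 2) ^+ 2 <= 1 by apply: out; nra.
  nra.
have s_ge0 := sqnorm_ge0 z.
set s := sqnorm z in z_lt1 s_ge0 *.
have t_gt0 : 0 < 1 - s by lra.
exists ((1 - s) / 3) => [|y]; first by rewrite divr_gt0.
rewrite -[y in unit_ball _ _ y](subrK z) [y - z + z]addrC /unit_ball /=.
move: (y - z) => w w_small.
have w_lt : sqnorm w * 9 < (1 - s) ^+ 2.
  move: w_small; rewrite expr_div_n ltr_pdivlMr // [3 ^+ 2]expr2; lra.
have w_t : ((1 - s) / 2)^-1 * sqnorm w <= 2 * (1 - s) / 9.
  by rewrite invf_div mulrAC ler_pdivrMr //; nra.
have := dot_le_young z w (divr_gt0 t_gt0 (ltr0Sn _ 1) : 0 < (1 - s) / 2).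
rewrite sqnormD -/s.
have := sqnorm_ge0 w; nra.
Qed.

Lemma K_positive_unit_ballP f :
  K_positive (unit_ball R n) f <-> forall x, sqnorm x <= 1 -> sqnorm (f x) <= 1.
Proof.
by split=> [f_ball x x_le1|f_ball _ [x x_le1 <-]]; [apply: f_ball; exists x | apply: f_ball].
Qed.

Lemma strictly_K_positive_unit_ballP f :
  strictly_K_positive (unit_ball R n) f <-> forall x, sqnorm x <= 1 -> sqnorm (f x) < 1.
Proof.
split=> [f_int x x_le1|f_int _ [x x_le1 <-]]; apply/interior_unit_ballP.
  by apply: f_int; exists x.
exact: f_int.
Qed.

End UnitBall.

Lemma sum_from_first_nonzero {V : zmodType} {N} {G : 'I_N -> V} {j0 : 'I_N} :
  (forall j : 'I_N, (j < j0)%N -> G j = 0) ->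
  \sum_j G j = G j0 + \sum_(j : 'I_N | (j0 < j)%N) G j.
Proof.
move=> G0; rewrite (bigD1 j0) //=; congr (_ + _).
rewrite big_mkcond [RHS]big_mkcond; apply: eq_bigr => j _ /=.
have [-> | ne] := eqVneq j j0; first by rewrite ltnn.
case: ltnP => // le_j; rewrite G0 // ltn_neqAle le_j andbT; exact: ne.
Qed.

Lemma exists_nonzero_of_sum_neq0 {V : zmodType} {N} (w : 'I_N -> V) :
  \sum_i w i != 0 -> exists i, w i != 0.
Proof.
move=> sum_neq0; apply/existsP; apply: contraNT sum_neq0.
by rewrite negb_exists => /forallP w0; apply/eqP/big1 => i _; apply/eqP/negPn/w0.
Qed.

Section AffineDependence.
Variables (F : fieldType) (n N : nat) (X : 'I_N -> 'cV[F]_n).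
Hypothesis many_points : (n.+1 < N)%N.

Lemma affine_relation_exists : exists c : 'I_N -> F,
  [/\ exists j, c j != 0, \sum_j c j = 0 & \sum_j c j *: X j = 0].
Proof.
set V := row_mx (\matrix_(j, k) X j k 0) (const_mx 1 : 'M[F]_(N, 1)).
have : kermx V != 0.
  rewrite kermx_eq0 /row_free neq_ltn; apply/orP; left.
  by apply: leq_ltn_trans (rank_leq_col V) _; rewrite addn1.
case/rowV0Pn => v; rewrite sub_kermx mul_mx_row row_mx_eq0 => /andP[/eqP vX /eqP v1] v0.
exists (fun j => v 0 j); split.
- apply/existsP; apply: contraNT v0; rewrite negb_exists => /forallP v0.
  by apply/eqP/matrixP => i j; rewrite ord1 mxE; apply/eqP/negPn/v0.
- have := congr1 (fun A : 'M_1 => A 0 0) v1; rewrite mxE [RHS]mxE => sum0.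
  by rewrite -[RHS]sum0; apply: eq_bigr => j _; rewrite mxE mulr1.
- apply/(@colP F n) => k; rewrite summxE mxE.
  have := congr1 (fun A : 'rV_n => A 0 k) vX; rewrite mxE [RHS]mxE => sumk.
  by rewrite -[RHS]sumk; apply: eq_bigr => j _; rewrite !mxE.
Qed.

Lemma affine_dependence_pivot : exists (j0 : 'I_N) (w : 'I_N -> F),
  [/\ \sum_j w j = 1, X j0 = \sum_j w j *: X j & forall j, w j != 0 -> (j0 < j)%N].
Proof.
have [c [[j1 cj1] c_sum c_comb]] := affine_relation_exists.
case: (@arg_minnP _ j1 (fun j => c j != 0) val cj1) => j0 cj0 j0_min.
have c_before (j : 'I_N) : (j < j0)%N -> c j = 0.
  by move=> j_lt; apply/eqP; apply: contraTT j_lt => /j0_min; rewrite -leqNgt.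
exists j0, (fun j : 'I_N => if (j0 < j)%N then - (c j / c j0) else 0); split.
- rewrite -big_mkcond sumrN -mulr_suml.
  move: c_sum; rewrite (sum_from_first_nonzero c_before) addrC => /eqP.
  by rewrite addr_eq0 => /eqP ->; rewrite mulNr opprK mulfV.
- have -> : \sum_(j : 'I_N) (if (j0 < j)%N then - (c j / c j0) else 0) *: X j
             = - (c j0)^-1 *: \sum_(j : 'I_N | (j0 < j)%N) c j *: X j.
    rewrite scaler_sumr [RHS]big_mkcond; apply: eq_bigr => j _.
    by case: ifP => _; rewrite ?scale0r // scalerA mulNr mulrC.
  move: c_comb; rewrite (sum_from_first_nonzero (G := fun j => c j *: X j) (j0 := j0)).
    rewrite addrC => /eqP; rewrite addr_eq0 => /eqP ->.
    by rewrite scalerN scaleNr opprK scalerA mulVf ?scale1r.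
  by move=> j /c_before ->; rewrite scale0r.
- by move=> j; case: ifP => // _; rewrite eqxx.
Qed.

End AffineDependence.

Arguments affine_dependence_pivot {F n N} X.

Section BallPreservingAffine.
Context {R : realType} {n : nat}.
Variables (M : 'M[R]_n) (d : 'cV[R]_n).
Hypothesis ball_Md : forall z, sqnorm z <= 1 -> sqnorm (M *m z + d) <= 1.
Implicit Types (x z : 'cV[R]_n).

Lemma linear_part_eq0_of_interior_contact x :
  sqnorm x < 1 -> sqnorm (M *m x + d) = 1 -> M = 0.
Proof.
move=> /interior_unit_ballP[e e_gt0 near_x] contact_x.
suff Mw0 (w : 'cV_n) : M *m w = 0.
  apply/matrixP => i j; have := congr1 (fun v : 'cV_n => v i 0) (Mw0 (delta_mx j 0)).
  by rewrite -colE !mxE.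
(* The images of x +- eps w lie in the ball and average to a point of the sphere. *)
have W_ge0 := sqnorm_ge0 w; set W := sqnorm w in W_ge0.
set eps := e / (1 + W).
have eps_gt0 : 0 < eps by rewrite divr_gt0 //; lra.
have eps_W : eps * (1 + W) = e by rewrite mulfVK // gt_eqF //; lra.
have eps_small : sqnorm (eps *: w) < e ^+ 2 by rewrite sqnormZ -/W -eps_W; nra.
have ball_p : sqnorm (M *m (x + eps *: w) + d) <= 1.
  by apply/ball_Md/near_x; rewrite addrAC subrr add0r.
have ball_m : sqnorm (M *m (x - eps *: w) + d) <= 1.
  by apply/ball_Md/near_x; rewrite addrAC subrr add0r sqnormN.
move: ball_p ball_m; rewrite mulmxDr mulmxBr addrAC [M *m x - _ + d]addrAC.
have := parallelogram (M *m x + d) (M *m (eps *: w)).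
rewrite contact_x -scalemxAr sqnormZ => para le_p le_m.
have : sqnorm (M *m w) = 0.
  apply/eqP; rewrite eq_le sqnorm_ge0 andbT -(ler_pM2l (exprn_gt0 2 eps_gt0)) mulr0.
  lra.
exact: sqnorm_eq0.
Qed.

Definition contact x := sqnorm x = 1 /\ sqnorm (M *m x + d) = 1.

Definition contact_scale x := dot (M *m x + d) (M *m x).

Lemma contact_dot_offset {x} : contact x -> dot (M *m x + d) d = 1 - contact_scale x.
Proof.
move=> [_ gx1]; have : dot (M *m x + d) (M *m x + d) = 1 by rewrite -sqnormE.
rewrite dotDr /contact_scale; lra.
Qed.

(* M x + d is an outer normal of the ball at M x + d, so M^T (M x + d) is a
   supporting functional of the ball at x, hence a multiple of x. *)
Lemma contact_normal {x} : contact x -> M^T *m (M *m x + d) = contact_scale x *: x.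
Proof.
move=> cx; have [x1 gx1] := cx; have y_d := contact_dot_offset cx.
set y := M *m x + d in gx1 y_d *; set l := contact_scale x in y_d *.
have le_l z : sqnorm z <= 1 -> dot (M^T *m y) z <= l.
  move=> z_le1; have := dot_le_sqnorm y (M *m z + d); have := ball_Md _ z_le1.
  by rewrite dotDr y_d -dot_mulmxr gx1; lra.
have l_x : dot (M^T *m y) x = l by rewrite -dot_mulmxr.
have := sqnorm_le_of_dot_le le_l => le_l2.
apply/eqP; rewrite -subr_eq0; apply/eqP/sqnorm_eq0/eqP.
by rewrite eq_le sqnorm_ge0 andbT sqnormB sqnormZ x1 dotZr l_x; nra.
Qed.

Lemma contact_dot {x} : contact x -> forall z,
  dot (M *m x + d) (M *m z + d) - 1 = contact_scale x * (dot x z - 1).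
Proof.
move=> cx z; rewrite dotDr dot_mulmxr contact_normal // dotZl contact_dot_offset //.
by ring.
Qed.

Lemma contact_scale_eq {x x'} : contact x -> contact x' -> contact_scale x = contact_scale x'.
Proof.
move=> cx cx'; have [<-//|xx'] := eqVneq x x'.
have D_neq0 : dot x x' - 1 != 0.
  by rewrite subr_eq0; apply: contra_neq xx'; apply: unit_dot_eq1; [case: cx | case: cx'].
apply: (mulIf D_neq0); rewrite -contact_dot // dotC [dot x x']dotC -contact_dot //.
Qed.

Lemma contact_affine_comb N (w : 'I_N -> R) (p : 'I_N -> 'cV[R]_n) y :
  \sum_i w i = 1 -> y = \sum_i w i *: p i -> sqnorm y = 1 ->
  (forall i, w i != 0 -> contact (p i)) -> contact y.
Proof.
move=> w1 y_comb y1 cp; split=> //.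
have [i0 wi0] : exists i0, w i0 != 0 by apply: exists_nonzero_of_sum_neq0; rewrite w1 oner_neq0.
set l := contact_scale (p i0).
have each i : w i * dot (M *m p i + d) (M *m y + d) - w i
              = l * (w i * dot (p i) y) - l * w i.
  have [->|wi] := eqVneq (w i) 0; first by rewrite !(mul0r, mulr0) subr0.
  have := contact_dot (cp i wi) y; rewrite (contact_scale_eq (cp i wi) (cp i0 wi0)).
  move/(congr1 (fun r => w i * r)); rewrite mulrBr mulr1 => ->; rewrite /l; ring.
(* Summing these gives |M y + d|^2 - 1 = l (|y|^2 - 1) = 0. *)
have g_comb : M *m y + d = \sum_i w i *: (M *m p i + d).
  rewrite y_comb mulmx_sumr; under [RHS]eq_bigr => i _ do rewrite scalerDr scalemxAr.
  by rewrite big_split /= -scaler_suml w1 scale1r.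
have : \sum_i (w i * dot (M *m p i + d) (M *m y + d) - w i)
       = \sum_i (l * (w i * dot (p i) y) - l * w i) by apply: eq_bigr => i _; apply: each.
rewrite !sumrB -!mulr_sumr w1 -!dot_suml -g_comb -y_comb -!sqnormE y1; lra.
Qed.

End BallPreservingAffine.

Arguments linear_part_eq0_of_interior_contact {R n M d} ball_Md {x}.
Arguments contact_affine_comb {R n M d} ball_Md {N}.

Lemma is_affine_iter {R : realType} {n : nat} {f : 'cV[R]_n -> 'cV[R]_n} j :
  is_affine f -> is_affine (iter j f).
Proof.
move=> [A [b fE]]; elim: j => [|j [M [d fjE]]].
  by exists 1%:M, 0 => x; rewrite mul1mx addr0.
by exists (A *m M), (A *m d + b) => x; rewrite iterS fjE fE mulmxDr mulmxA addrA.
Qed.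

Lemma iter_ball {R : realType} {n : nat} {f : 'cV[R]_n -> 'cV[R]_n} :
  (forall x, sqnorm x <= 1 -> sqnorm (f x) <= 1) ->
  forall j x, sqnorm x <= 1 -> sqnorm (iter j f x) <= 1.
Proof. by move=> f_ball j x x_le1; elim: j => //= j; apply: f_ball. Qed.

Section BoundaryOrbits.
Context {R : realType} {n : nat}.
Variable f : 'cV[R]_n -> 'cV[R]_n.
Hypothesis f_affine : is_affine f.
Hypothesis f_ball : forall x, sqnorm x <= 1 -> sqnorm (f x) <= 1.
Variable k0 : nat.
Hypothesis f_k0_strict : forall x, sqnorm x <= 1 -> sqnorm (iter k0 f x) < 1.
Implicit Types (x y : 'cV[R]_n).

Definition on_sphere_upto j x := forall i, (i <= j)%N -> sqnorm (iter i f x) = 1.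

Lemma on_sphere_upto_le {j j' x} : (j' <= j)%N -> on_sphere_upto j x -> on_sphere_upto j' x.
Proof. by move=> le_j' Sx i le_i; apply: Sx; apply: leq_trans le_j'. Qed.

Lemma iter_affine_ball j : exists (M : 'M[R]_n) (d : 'cV[R]_n),
  (forall x, iter j f x = M *m x + d) /\ forall z, sqnorm z <= 1 -> sqnorm (M *m z + d) <= 1.
Proof.
have [M [d fjE]] := is_affine_iter j f_affine.
by exists M, d; split=> // z; rewrite -fjE; apply: iter_ball.
Qed.

Lemma on_sphere_upto_of_boundary j x :
  sqnorm x <= 1 -> sqnorm (iter j f x) = 1 -> on_sphere_upto j x.
Proof.
move=> x_le1 fjx1 i le_i; have [M [d [fE ball_Md]]] := iter_affine_ball (j - i).
have := iter_ball f_ball i x x_le1; rewrite le_eqVlt => /orP[/eqP //|fix_lt1].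
have end_contact : sqnorm (M *m iter i f x + d) = 1 by rewrite -fE -iterD subnK.
have M0 := linear_part_eq0_of_interior_contact ball_Md fix_lt1 end_contact.
have fE_const z : iter (j - i) f z = d by rewrite fE M0 mul0mx add0r.
have d1 : sqnorm d = 1 by rewrite -(fE_const (iter i f x)) -iterD subnK.
have zero_ball : sqnorm (0 : 'cV[R]_n) <= 1 by rewrite sqnorm0 ler01.
have := f_k0_strict _ (iter_ball f_ball (j - i) 0 zero_ball).
by rewrite -iterD addnC iterD fE_const d1 ltxx.
Qed.

Lemma on_sphere_upto_stable_empty j :
  (forall x, on_sphere_upto j x -> on_sphere_upto j.+1 x) -> forall x, ~ on_sphere_upto j x.
Proof.
move=> stable x Sx.
have S_more m y : on_sphere_upto j y -> on_sphere_upto (j + m) y.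
  elim: m y => [|m IH] y Sy; first by rewrite addn0.
  have Sfy : on_sphere_upto j (f y) by move=> i le_i; rewrite -iterSr; apply: stable.
  by case=> [_|i]; [apply: Sy | rewrite addnS ltnS iterSr; apply: IH].
have := f_k0_strict x; rewrite (Sx 0%N isT) lexx (S_more k0 x Sx k0 (leq_addl j k0)) ltxx.
by move/(_ isT).
Qed.

Lemma on_sphere_upto_affine_comb N (w : 'I_N -> R) (X : 'I_N -> 'cV[R]_n) j x :
  \sum_i w i = 1 -> x = \sum_i w i *: X i -> sqnorm x = 1 ->
  (forall i, w i != 0 -> on_sphere_upto j (X i)) -> on_sphere_upto j x.
Proof.
move=> w1 x_comb x1 SX i le_i; have [M [d [fE ball_Md]]] := iter_affine_ball i.
suff [] : contact M d x by rewrite fE.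
apply: (contact_affine_comb ball_Md w X x w1 x_comb x1) => k wk.
by split; [apply: (SX k wk 0%N) | rewrite -fE; apply: SX].
Qed.

Lemma on_sphere_upto_empty x : ~ on_sphere_upto n.+1 x.
Proof.
move=> Sx.
have unstable j : (j <= n)%N -> exists y, on_sphere_upto j y /\ ~ on_sphere_upto j.+1 y.
  move=> le_j; apply: contrapT => none.
  apply: (on_sphere_upto_stable_empty j _ x (on_sphere_upto_le (leqW le_j) Sx)).
  by move=> y Sy; apply: contrapT => nSy; apply: none; exists y.
have witness (j : 'I_n.+2) :
    exists y, on_sphere_upto j y /\ ((j <= n)%N -> ~ on_sphere_upto j.+1 y).
  case: (leqP j n) => [/unstable [y [Sy nSy]] | gt_j]; first by exists y.
  by exists x; split => //; apply: on_sphere_upto_le Sx; rewrite -ltnS.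
have [X X_spec] := boolp.choice witness.
have [j0 [w [w1 X_comb w_after]]] := affine_dependence_pivot X (ltnSn n.+1).
have [S_j0 nS_j0] := X_spec j0.
have [i wi] : exists i, w i != 0 by apply: exists_nonzero_of_sum_neq0; rewrite w1 oner_neq0.
apply: nS_j0; first by rewrite -ltnS; apply: leq_trans (w_after i wi) (ltn_ord i).
apply: on_sphere_upto_affine_comb w1 X_comb (S_j0 0%N isT) _ => k wk.
by apply: on_sphere_upto_le (X_spec k).1; apply: w_after.
Qed.

Lemma iter_dim_succ_strict x : sqnorm x <= 1 -> sqnorm (iter n.+1 f x) < 1.
Proof.
move=> x_le1; rewrite lt_neqAle iter_ball // andbT; apply/eqP => fx1.
exact/on_sphere_upto_empty/on_sphere_upto_of_boundary/fx1.
Qed.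

End BoundaryOrbits.

Lemma gamma_aff_map_unit_ball_le {R : realType} {n : nat} {f : 'cV[R]_n -> 'cV[R]_n} {k} :
  is_affine f -> K_primitive (unit_ball R n) f -> is_gamma_aff_map (unit_ball R n) f k ->
  (k <= n.+1)%N.
Proof.
move=> f_aff [/K_positive_unit_ballP f_ball [k0 [_ /strictly_K_positive_unit_ballP f_k0]]].
case=> _ _ k_min; rewrite leqNgt; apply/negP => /(k_min n.+1 isT); apply.
by apply/strictly_K_positive_unit_ballP; apply: (iter_dim_succ_strict _ f_aff f_ball _ f_k0).
Qed.

Lemma weighted_shift_ineq {R : realFieldType} {r a b : R} (t : R) :
  a ^+ 2 < r ^+ 2 -> (r ^+ 2 - a ^+ 2) * (1 - r ^+ 2) = r ^+ 2 * b ^+ 2 ->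
  (a * t + b) ^+ 2 + r ^+ 2 * (1 - t ^+ 2) <= 1.
Proof.
move=> a_lt_r balance; set D := r ^+ 2 - a ^+ 2.
(* Under the balance condition, D times the slack is a perfect square. *)
have D_gt0 : 0 < D by rewrite subr_gt0.
have key : D * (1 - ((a * t + b) ^+ 2 + r ^+ 2 * (1 - t ^+ 2)))
           = (D * t - a * b) ^+ 2 + (D * (1 - r ^+ 2) - r ^+ 2 * b ^+ 2) by rewrite /D; ring.
rewrite balance subrr addr0 in key.
by rewrite -subr_ge0 -(pmulr_rge0 _ D_gt0) key sqr_ge0.
Qed.

Section CyclicShiftExample.
Variables (R : realType) (m : nat).

Local Notation r := (2^-1 : R).
Local Notation q := (r ^+ (2 * m.+1)).
Local Notation a := (- r ^+ m.+2).
Local Notation b := (Num.sqrt ((1 - r ^+ 2) * (1 - q))).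
(* a r^m = -q makes the (m+1)-st iterate x |-> -q x + const, and b is chosen so
   that weighted_shift_ineq applies. *)

Definition cyclic_shift (x : 'cV[R]_m.+1) : 'cV[R]_m.+1 :=
  \col_i (if i == ord0 then a * x ord_max 0 + b else r * x (inord i.-1) 0).

Lemma cyclic_shift_affine : is_affine cyclic_shift.
Proof.
exists (\matrix_(i, j) (if i == ord0 then (j == ord_max)%:R * a
                        else (j == inord i.-1 :> 'I_m.+1)%:R * r)).
exists (\col_i (if i == ord0 then b else 0)) => x; apply/colP => i; rewrite !mxE.
have [-> | i0] := eqVneq i ord0.
  rewrite (bigD1 ord_max) //= big1 => [|j /negbTE j_max].
    by rewrite !mxE !eqxx mul1r addr0.
  by rewrite !mxE j_max !mul0r.
rewrite (bigD1 (inord i.-1)) //= big1 => [|j /negbTE j_i].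
  by rewrite !mxE (negbTE i0) eqxx mul1r !addr0.
by rewrite !mxE (negbTE i0) j_i !mul0r.
Qed.

Lemma iter_cyclic_shift k x (i : 'I_m.+1) : (k <= m.+1)%N ->
  iter k cyclic_shift x i 0 =
    if (k <= i)%N then r ^+ k * x (inord (i - k)) 0
    else a * r ^+ k.-1 * x (inord (i + m.+1 - k)) 0 + b * r ^+ i.
Proof.
elim: k i => [|k IH] i le_k; first by rewrite expr0 mul1r subn0 inord_val.
have lt_k : (k <= m)%N by [].
rewrite iterS mxE; have [-> | i0] := eqVneq i ord0.
  rewrite IH ?leqW // lt_k expr0 mulr1 mulrA.
  by congr (_ * x _ 0 + _); apply: val_inj; rewrite /= !inordK //; lia.
have i_pos : (0 < i)%N by rewrite lt0n; apply: contra_neq i0 => i_eq0; apply: val_inj.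
have i_pred : (i.-1 < m.+1)%N by apply: leq_ltn_trans (leq_pred i) (ltn_ord i).
rewrite IH ?leqW // (inordK i_pred); case: (leqP k i.-1) => le_ki.
  have -> : (k < i)%N by lia.
  by rewrite exprS mulrA; congr (_ * x _ 0); apply: val_inj; rewrite /= !inordK //; lia.
have -> : (k < i)%N = false by apply/negbTE; lia.
have k_pos : (0 < k)%N by lia.
rewrite -(prednK k_pos) -[in RHS](prednK i_pos) !exprS.
have -> : (i.-1 + m.+1 - k.-1.+1 = i.-1.+1 + m.+1 - k.-1.+1.+1)%N by lia.
ring.
Qed.

Let r_sq : r ^+ 2 = 4^-1.
Proof. by rewrite exprVn -natrX. Qed.

Let q_gt0 : 0 < q.
Proof. by rewrite exprn_gt0 // invr_gt0. Qed.

Let q_le : q <= 4^-1.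
Proof.
rewrite exprM r_sq exprS ger_pMr ?invr_gt0 //.
by rewrite exprn_ile1 // ?invr_ge0 // invf_le1 //; lra.
Qed.

Let a_sq : a ^+ 2 = r ^+ 2 * q.
Proof. by rewrite sqrrN -exprM -exprD; congr (_ ^+ _); lia. Qed.

Let a_mul_r : a * r ^+ m = - q.
Proof. by rewrite mulNr -exprD; congr (- (_ ^+ _)); lia. Qed.

Let a_bounds : - 4^-1 <= a <= 0.
Proof.
rewrite oppr_le0 exprn_ge0 ?invr_ge0 // andbT lerN2 !exprS mulrA -expr2 r_sq.
by rewrite ger_pMr ?invr_gt0 // exprn_ile1 ?invr_ge0 // invf_le1 //; lra.
Qed.

Let b_sq : b ^+ 2 = (1 - r ^+ 2) * (1 - q).
Proof.
by rewrite sqr_sqrtr // mulr_ge0 // subr_ge0 ?r_sq //; have := q_le; lra.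
Qed.

Let b_ge : 3 / 4 <= b.
Proof.
have b_ge0 : 0 <= b := sqrtr_ge0 _.
have : (3 / 4) ^+ 2 <= b ^+ 2.
  by rewrite b_sq r_sq expr2 ler_pM //; have := q_le; lra.
by rewrite ler_pXn2r // nnegrE; lra.
Qed.

Lemma sqnorm_cyclic_shift x : sqnorm (cyclic_shift x) =
  (a * x ord_max 0 + b) ^+ 2 + r ^+ 2 * (sqnorm x - x ord_max 0 ^+ 2).
Proof.
rewrite [sqnorm x]/sqnorm big_ord_recr addrK /sqnorm big_ord_recl mxE eqxx mulr_sumr.
congr (_ + _); apply: eq_bigr => i _; rewrite mxE /= exprMn; congr (_ * x _ 0 ^+ 2).
by apply: val_inj; rewrite /= add0n inordK // ltnS ltnW.
Qed.

Lemma cyclic_shift_ball {x} : sqnorm x <= 1 -> sqnorm (cyclic_shift x) <= 1.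
Proof.
move=> x_le1; rewrite sqnorm_cyclic_shift.
have balance : (r ^+ 2 - a ^+ 2) * (1 - r ^+ 2) = r ^+ 2 * b ^+ 2.
  by rewrite a_sq b_sq; ring.
have a_lt_r : a ^+ 2 < r ^+ 2.
  by rewrite a_sq gtr_pMr ?exprn_gt0 ?invr_gt0 //; have := q_le; lra.
apply: le_trans (weighted_shift_ineq (x ord_max 0) a_lt_r balance).
by rewrite lerD2l ler_pM2l ?exprn_gt0 ?invr_gt0 // lerB.
Qed.

Definition pole : 'cV[R]_m.+1 := (1 - q)^-1 *: \col_i (b * r ^+ i).

Let one_sub_q_gt0 : 0 < 1 - q.
Proof. by have := q_le; lra. Qed.

Lemma sqnorm_pole : sqnorm pole = 1.
Proof.
have geom : \sum_(i < m.+1) (r ^+ 2) ^+ i * (1 - r ^+ 2) = 1 - q.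
  by rewrite -mulr_suml mulrC -opprB mulNr -subrX1 opprB -exprM.
rewrite sqnormZ /sqnorm (eq_bigr (fun i : 'I_m.+1 => (r ^+ 2) ^+ i * (1 - r ^+ 2) * (1 - q))).
  by rewrite -mulr_suml geom -expr2 exprVn mulVf // expf_neq0 // gt_eqF // one_sub_q_gt0.
by move=> i _; rewrite mxE exprMn b_sq exprAC mulrC mulrA.
Qed.

Let scale_pole : (1 - q) *: pole = \col_i (b * r ^+ i).
Proof. by rewrite scalerA mulfV ?scale1r // gt_eqF // one_sub_q_gt0. Qed.

Lemma iter_cyclic_shift_period x :
  iter m.+1 cyclic_shift x = (- q) *: x + (1 - q) *: pole.
Proof.
apply/colP => i; rewrite iter_cyclic_shift // leqNgt ltn_ord /= addnK inord_val.
by rewrite scale_pole !mxE a_mul_r.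
Qed.

Lemma iter_cyclic_shift_pole : iter m.+1 cyclic_shift (- pole) = pole.
Proof. by rewrite iter_cyclic_shift_period scalerN scaleNr opprK -scalerDl addrC subrK scale1r. Qed.

Lemma cyclic_shift_strict x : sqnorm x <= 1 -> sqnorm (iter m.+2 cyclic_shift x) < 1.
Proof.
(* The (m+2)-nd iterate is the combination (1-q) pole + q (-y) with y in the
   ball; it is strict because y != -pole, their first coordinates being positive. *)
move=> x_le1; rewrite iterSr iter_cyclic_shift_period.
have y_le1 := cyclic_shift_ball x_le1; set y := cyclic_shift x in y_le1 *.
rewrite scaleNr -scalerN addrC sqnorm_convex_comb ?subrK // sqnorm_pole sqnormN opprK.
have pole_y_gt0 : 0 < sqnorm (pole + y).
  apply: lt_le_trans (sqr_coord_le_sqnorm _ ord0); rewrite exprn_gt0 // !mxE eqxx mulr1.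
  have xm_le1 : x ord_max 0 <= 1.
    by have := le_trans (sqr_coord_le_sqnorm x ord_max) x_le1; nra.
  have [a_ge a_le0] := andP a_bounds; have b_large := b_ge.
  have : 0 < (1 - q)^-1 * b by rewrite mulr_gt0 ?invr_gt0 ?one_sub_q_gt0 //; lra.
  by nra.
have := mulr_gt0 (mulr_gt0 one_sub_q_gt0 q_gt0) pole_y_gt0; have := q_gt0; nra.
Qed.

Lemma cyclic_shift_gamma_aff :
  [/\ is_affine cyclic_shift, K_primitive (unit_ball R m.+1) cyclic_shift
     & is_gamma_aff_map (unit_ball R m.+1) cyclic_shift m.+2].
Proof.
have strict : strictly_K_positive (unit_ball R m.+1) (iter m.+2 cyclic_shift).
  by apply/strictly_K_positive_unit_ballP => x; apply: cyclic_shift_strict.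
split; [exact: cyclic_shift_affine | split; last by exists m.+2 |].
  by apply/K_positive_unit_ballP => x; apply: cyclic_shift_ball.
split=> // j _ j_lt /strictly_K_positive_unit_ballP j_strict.
have pole_ball : sqnorm (iter (m.+1 - j) cyclic_shift (- pole)) <= 1.
  by apply: iter_ball => [x|]; [apply: cyclic_shift_ball | rewrite sqnormN sqnorm_pole].
by have := j_strict _ pole_ball; rewrite -iterD subnKC // iter_cyclic_shift_pole sqnorm_pole ltxx.
Qed.
End CyclicShiftExample.

Theorem theorem3 (R : realType) (n : nat) (hn : (1 <= n)%N) :
  gamma_aff (unit_ball R n) = ((n.+1)%:R : R)%:E.
Proof.
case: n hn => [//|m] _; apply/eqP; rewrite eq_le; apply/andP; split.
  apply: ge_ereal_sup => _ [k [f [f_aff f_prim f_gamma]] <-].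
  by rewrite lee_fin ler_nat (gamma_aff_map_unit_ball_le f_aff f_prim f_gamma).
apply: ereal_sup_ubound; exists m.+2 => //=.
by exists (cyclic_shift R m); apply: cyclic_shift_gamma_aff.
Qed.
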